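(* Let $a_1,a_2,b_1,b_2>0$ be integers, and let $m_1,m_2,n_1,n_2$ be positive integers such that $m_1+m_2>a_1+a_2$, $n_1+n_2>b_1+b_2$, $m_1-m_2=a_1-a_2$, $n_1-n_2=b_1-b_2$ and $\frac{n_1+n_2}{m_1+m_2}=\frac{b_1+b_2}{a_1+a_2}$. Then there exists a $(0,1)$ matrix $Y$ of size $(m_1+m_2)\times(n_1+n_2)$ such that $$Y\begin{bmatrix}\mathbf 1_{n_1}\\-\mathbf 1_{n_2}\end{bmatrix}=\begin{bmatrix}b_1\mathbf 1_{m_1}\\-b_2\mathbf 1_{m_2}\end{bmatrix},\qquad Y^T\begin{bmatrix}\mathbf 1_{m_1}\\-\mathbf 1_{m_2}\end{bmatrix}=\begin{bmatrix}a_1\mathbf 1_{n_1}\\-a_2\mathbf 1_{n_2}\end{bmatrix}.$$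
   Context: $\mathbf 1_p$ denotes the all-ones column vector of length $p$. *)

From mathcomp Require Import all_boot all_order all_algebra.
Set Implicit Arguments. Unset Strict Implicit. Unset Printing Implicit Defensive.
Import Order.TTheory GRing.Theory Num.Theory.
Local Open Scope ring_scope.

Definition zero_one_mx (m n : nat) (Y : 'M[int]_(m, n)) : Prop :=
  forall i j, Y i j = 0 \/ Y i j = 1.

Definition signed_ones (p q : nat) (c1 c2 : int) : 'cV[int]_(p + q) :=
  col_mx (const_mx c1) (const_mx (- c2)).

From mathcomp Require Import all_boot all_order all_algebra.
From mathcomp Require Import zify.
Set Implicit Arguments. Unset Strict Implicit. Unset Printing Implicit Defensive.
Import Order.TTheory GRing.Theory Num.Theory.

(* Idea: place the ones of row i of an M x N matrix at the r columns congruent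
   to i r, ..., i r + r - 1 modulo N.  If r <= N this is a (0,1) matrix with row
   sums r, and if M r = c N every column sum is c, since the rows cover the
   integers below M r = c N consecutively.  Complementing the two off-diagonal
   blocks of the n1 + n2 / m1 + m2 partition turns these constant line sums
   into the required signed sums once r = b1 + n2 = b2 + n1 and
   c = a1 + m2 = a2 + m1; the ratio hypothesis is exactly M r = c N. *)

Lemma sum_eqn_modn N x : 0 < N -> \sum_(j < N) (x %% N == j : nat) = 1.
Proof.
move=> N_gt0; rewrite (bigD1 (Ordinal (ltn_pmod x N_gt0))) //= eqxx big1 // => j.
by rewrite -val_eqE /= eq_sym => /negbTE ->.
Qed.

Lemma sum_count_residue N (s : seq nat) : 0 < N ->
  \sum_(j < N) count (fun t => t %% N == j) s = size s.
Proof.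
move=> N_gt0; elim: s => [|x s IHs] /=; first by rewrite big1.
by rewrite big_split /= IHs sum_eqn_modn.
Qed.

Lemma count_residue_iota_le1 N a r j : r <= N ->
  count (fun t => t %% N == j) (iota a r) <= 1.
Proof.
move=> le_rN; rewrite -(count_map (modn^~ N) (pred1 j)).
suff uniq_res : uniq (map (modn^~ N) (iota a r)).
  by rewrite (count_uniq_mem _ uniq_res) leq_b1.
rewrite -[a]addn0 iotaDl -map_comp map_inj_in_uniq ?iota_uniq // => k l.
rewrite !mem_iota => /andP[_ lt_kr] /andP[_ lt_lr] /= /eqP.
by rewrite eqn_modDl !modn_small ?(leq_trans _ le_rN) // => /eqP.
Qed.

Lemma sum_count_iota_blocks (P : pred nat) M r :
  \sum_(i < M) count P (iota (i * r) r) = count P (iota 0 (M * r)).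
Proof.
elim: M => [|M IHM]; first by rewrite big_ord0.
by rewrite big_ord_recr /= IHM mulSnr iotaD count_cat.
Qed.

Lemma count_residue_iota_mul N c j : j < N ->
  count (fun t => t %% N == j) (iota 0 (c * N)) = c.
Proof.
move=> lt_jN; elim: c => [|c IHc] //.
rewrite mulSnr iotaD count_cat IHc add0n -[c * N]addn0 iotaDl count_map.
rewrite (@eq_in_count _ _ (pred1 j)) => [|t]; last first.
  by rewrite mem_iota /= modnMDl => lt_tN; rewrite modn_small.
by rewrite (count_uniq_mem _ (iota_uniq 0 N)) mem_iota lt_jN addn1.
Qed.

Local Open Scope ring_scope.

Definition cyclic_band_mx (M N r : nat) : 'M[int]_(M, N) :=
  \matrix_(i, j) (count (fun t => (t %% N)%N == j) (iota (i * r) r))%:R.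

Lemma cyclic_band_mx_zero_one M N r : (r <= N)%N -> zero_one_mx (cyclic_band_mx M N r).
Proof.
move=> le_rN i j; rewrite mxE.
by case: count (count_residue_iota_le1 (i * r) j le_rN) => [|[|]] // _; [left | right].
Qed.

Lemma cyclic_band_mx_row_sum M N r i : (0 < N)%N ->
  \sum_j cyclic_band_mx M N r i j = r%:R.
Proof.
move=> N_gt0; under eq_bigr do rewrite mxE.
by rewrite -natr_sum sum_count_residue // size_iota.
Qed.

Lemma cyclic_band_mx_col_sum M N r c j : (M * r = c * N)%N ->
  \sum_i cyclic_band_mx M N r i j = c%:R.
Proof.
move=> eq_McN; under eq_bigr do rewrite mxE.
by rewrite -natr_sum sum_count_iota_blocks eq_McN count_residue_iota_mul.
Qed.

Section ComplOffdiag.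
Variable R : pzRingType.

Definition compl_offdiag_mx m1 m2 n1 n2 (Z : 'M[R]_(m1 + m2, n1 + n2)) :=
  block_mx (ulsubmx Z) (const_mx 1 - ursubmx Z) (const_mx 1 - dlsubmx Z) (drsubmx Z).

Lemma trmx_compl_offdiag m1 m2 n1 n2 (Z : 'M[R]_(m1 + m2, n1 + n2)) :
  (compl_offdiag_mx Z)^T = compl_offdiag_mx Z^T.
Proof.
rewrite /compl_offdiag_mx tr_block_mx !linearB /= !trmx_const.
by rewrite trmx_ulsub trmx_drsub trmx_ursub trmx_dlsub.
Qed.

End ComplOffdiag.

Lemma compl_offdiag_zero_one m1 m2 n1 n2 (Z : 'M[int]_(m1 + m2, n1 + n2)) :
  zero_one_mx Z -> zero_one_mx (compl_offdiag_mx Z).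
Proof.
have zero_one_subr (x : int) : x = 0 \/ x = 1 -> 1 - x = 0 \/ 1 - x = 1.
  by case=> ->; [right | left].
move=> Z01 i j; rewrite /compl_offdiag_mx /block_mx !mxE.
by case: (split i) => i'; rewrite !mxE; case: (split j) => j'; rewrite !mxE;
  [exact: Z01 | exact: zero_one_subr | exact: zero_one_subr | exact: Z01].
Qed.

Lemma compl_offdiag_mul_signed_ones m1 m2 n1 n2 (Z : 'M[int]_(m1 + m2, n1 + n2)) r :
  (forall i, \sum_j Z i j = r) ->
  compl_offdiag_mx Z *m signed_ones n1 n2 1 1 = signed_ones m1 m2 (r - n2%:R) (r - n1%:R).
Proof.
move=> row_sum; rewrite mul_block_col; congr col_mx; apply/matrixP => i k.
- have := row_sum (lshift m2 i); rewrite big_split_ord /= => row_i.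
  rewrite !mxE; under eq_bigr do rewrite !mxE mulr1.
  under [X in _ + X]eq_bigr do rewrite !mxE mulrN1 opprB.
  by rewrite sumrB sumr_const card_ord -row_i addrA.
- have := row_sum (rshift m1 i); rewrite big_split_ord /= => row_i.
  rewrite !mxE; under eq_bigr do rewrite !mxE mulr1.
  under [X in _ + X]eq_bigr do rewrite !mxE mulrN1.
  by rewrite sumrB sumr_const card_ord sumrN -row_i opprB opprD addrA.
Qed.

Lemma eq_div_natq (p q p' q' : nat) : (0 < q)%N -> (0 < q')%N ->
  p%:Q / q%:Q = p'%:Q / q'%:Q -> (p * q' = p' * q)%N.
Proof.
move=> q_gt0 q'_gt0 /eqP; rewrite eqr_div ?intr_eq0 -?lt0n //.
by rewrite -!intrM eqr_int -!PoszM => /eqP [].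
Qed.

Theorem lemma4p33 (a1 a2 b1 b2 m1 m2 n1 n2 : nat) :
  (0 < a1)%N -> (0 < a2)%N -> (0 < b1)%N -> (0 < b2)%N ->
  (0 < m1)%N -> (0 < m2)%N -> (0 < n1)%N -> (0 < n2)%N ->
  (a1 + a2 < m1 + m2)%N -> (b1 + b2 < n1 + n2)%N ->
  (m1%:Z - m2%:Z = a1%:Z - a2%:Z) -> (n1%:Z - n2%:Z = b1%:Z - b2%:Z) ->
  ((n1 + n2)%:Q / (m1 + m2)%:Q = (b1 + b2)%:Q / (a1 + a2)%:Q) ->
  exists Y : 'M[int]_(m1 + m2, n1 + n2),
    zero_one_mx Y /\
    Y *m signed_ones n1 n2 1 1 = signed_ones m1 m2 b1%:Z b2%:Z /\
    Y^T *m signed_ones m1 m2 1 1 = signed_ones n1 n2 a1%:Z a2%:Z.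
Proof.
move=> a1_gt0 a2_gt0 b1_gt0 b2_gt0 m1_gt0 m2_gt0 n1_gt0 n2_gt0 lt_a_m lt_b_n
  eq_m eq_n ratio.
have cross : ((n1 + n2) * (a1 + a2) = (b1 + b2) * (m1 + m2))%N.
  by apply: eq_div_natq ratio; lia.
have eq_McN : ((m1 + m2) * (b1 + n2) = (a1 + m2) * (n1 + n2))%N by nia.
pose Z := cyclic_band_mx (m1 + m2) (n1 + n2) (b1 + n2).
exists (compl_offdiag_mx Z); split; [|split].
- by apply/compl_offdiag_zero_one/cyclic_band_mx_zero_one; lia.
- rewrite (compl_offdiag_mul_signed_ones (r := (b1 + n2)%:R)); last first.
    by move=> i; apply: cyclic_band_mx_row_sum; lia.
  by rewrite !natz; congr signed_ones; lia.
- rewrite trmx_compl_offdiag (compl_offdiag_mul_signed_ones (r := (a1 + m2)%:R)); last first.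
    by move=> j; rewrite -(cyclic_band_mx_col_sum j eq_McN); apply: eq_bigr => i; rewrite mxE.
  by rewrite !natz; congr signed_ones; lia.
Qed.
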